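(* Consider the drift-less setting with target $\rho_d=|\Psi\rangle\langle\Psi|$, and suppose $\rho_d$ is not DQLS. Suppose a QL Hamiltonian $H_c$ and QL noise operators $\{D_k\}$, in standard form with respect to $|\Psi\rangle$ ($D_k|\Psi\rangle=0$ for all $k$, $H_c|\Psi\rangle=h|\Psi\rangle$ with $h\in\mathbb R$), make $\rho_d$ GAS for $\mathcal L(H_c,\{D_k\})$. Then $\mathcal H_d=\mathrm{span}\{|\Psi\rangle\}$ is invariant under $H_c$, and there is no nonzero subspace $\mathcal K\subseteq\mathcal H_0$ with $\mathcal K\neq\mathcal H_d$ and $H_c\mathcal K\subseteq\mathcal K$. Moreover, $H_c'=H_c-hI$ is a QL Hamiltonian with $H_c'|\Psi\rangle=0$ and $\rho_d$ is GAS for $\mathcal L(H_c',\{D_k\})$.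
   Context: $\mathcal H=\bigotimes_{a=1}^n\mathcal H_a$ finite-dimensional with neighborhoods $\mathcal N_k\subsetneq\{1,\dots,n\}$. QL operator: $X_{\mathcal N_k}\otimes I_{\bar{\mathcal N}_k}$; QL Hamiltonian: sum of Hermitian QL operators. $\mathcal L(H,\{D_k\})(\rho)=-i[H,\rho]+\sum_k(D_k\rho D_k^\dagger-\frac12\{D_k^\dagger D_k,\rho\})$. GAS: $e^{\mathcal Lt}(\rho_0)\to\rho_d$ for every density operator $\rho_0$. $\rho_d$ is DQLS if there exist QL operators $D_k$ with $D_k|\Psi\rangle=0$ making $\rho_d$ GAS for $\mathcal L(0,\{D_k\})$. With $\rho_{\mathcal N_k}=\mathrm{Tr}_{\bar{\mathcal N}_k}\rho_d$, define $\mathcal H_0=\bigcap_k\mathrm{supp}(\rho_{\mathcal N_k}\otimes I_{\bar{\mathcal N}_k})$. *)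

From Stdlib Require Import Reals Lra Lia List Arith.
Open Scope R_scope.

Record Cplx := mkC { re : R; im : R }.
Definition Czero : Cplx := mkC 0 0.
Definition Cone : Cplx := mkC 1 0.
Definition Ci : Cplx := mkC 0 1.
Definition RtoC (r : R) : Cplx := mkC r 0.
Definition Cadd (a b : Cplx) : Cplx := mkC (re a + re b) (im a + im b).
Definition Cneg (a : Cplx) : Cplx := mkC (- re a) (- im a).
Definition Csub (a b : Cplx) : Cplx := Cadd a (Cneg b).
Definition Cmul (a b : Cplx) : Cplx :=
  mkC (re a * re b - im a * im b) (re a * im b + im a * re b).
Definition Cconj (a : Cplx) : Cplx := mkC (re a) (- im a).

Fixpoint Csum (n : nat) (f : nat -> Cplx) : Cplx :=
  match n with O => Czero | S m => Cadd (Csum m f) (f m) end.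

(** * Vectors and matrices of dimension D (entries outside [0,D) are ignored) *)
Definition Vec := nat -> Cplx.
Definition Mat := nat -> nat -> Cplx.

Definition veq (D : nat) (x y : Vec) : Prop := forall i, (i < D)%nat -> x i = y i.
Definition meq (D : nat) (A B : Mat) : Prop :=
  forall i j, (i < D)%nat -> (j < D)%nat -> A i j = B i j.

Definition vzero : Vec := fun _ => Czero.
Definition vadd (x y : Vec) : Vec := fun i => Cadd (x i) (y i).
Definition vscale (c : Cplx) (x : Vec) : Vec := fun i => Cmul c (x i).
Definition mv (D : nat) (A : Mat) (x : Vec) : Vec :=
  fun i => Csum D (fun k => Cmul (A i k) (x k)).

Definition mzero : Mat := fun _ _ => Czero.
Definition mid : Mat := fun i j => if Nat.eqb i j then Cone else Czero.
Definition madd (A B : Mat) : Mat := fun i j => Cadd (A i j) (B i j).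
Definition msub (A B : Mat) : Mat := fun i j => Csub (A i j) (B i j).
Definition mscale (c : Cplx) (A : Mat) : Mat := fun i j => Cmul c (A i j).
Definition mmul (D : nat) (A B : Mat) : Mat :=
  fun i j => Csum D (fun k => Cmul (A i k) (B k j)).
Definition adj (A : Mat) : Mat := fun i j => Cconj (A j i).
Definition herm (D : nat) (A : Mat) : Prop := meq D A (adj A).

Definition ketbra (psi : Vec) : Mat := fun i j => Cmul (psi i) (Cconj (psi j)).
Definition inner (D : nat) (x y : Vec) : Cplx := Csum D (fun i => Cmul (Cconj (x i)) (y i)).

Definition psd (D : nat) (A : Mat) : Prop :=
  forall x : Vec, re (inner D x (mv D A x)) >= 0 /\ im (inner D x (mv D A x)) = 0.
Definition trace (D : nat) (A : Mat) : Cplx := Csum D (fun i => A i i).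
Definition density (D : nat) (A : Mat) : Prop := psd D A /\ trace D A = Cone.

Definition dissip (D : nat) (Dk : Mat) (rho : Mat) : Mat :=
  let DD := mmul D (adj Dk) Dk in
  msub (mmul D (mmul D Dk rho) (adj Dk))
       (mscale (RtoC (1/2)) (madd (mmul D DD rho) (mmul D rho DD))).

Definition Lind (D : nat) (H : Mat) (Ds : list Mat) (rho : Mat) : Mat :=
  madd (mscale (Cneg Ci) (msub (mmul D H rho) (mmul D rho H)))
       (fold_right (fun Dk acc => madd (dissip D Dk rho) acc) mzero Ds).

(** * The flow e^{L t} (defined by its exponential series, entrywise) *)
Fixpoint Lpow (L : Mat -> Mat) (k : nat) (rho : Mat) : Mat :=
  match k with O => rho | S k' => L (Lpow L k' rho) end.

Definition expsum (D : nat) (L : Mat -> Mat) (t : R) (rho : Mat) (N : nat) : Mat :=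
  fun i j => Csum (S N) (fun k => Cmul (RtoC (t ^ k / INR (fact k))) (Lpow L k rho i j)).

Definition is_flow (D : nat) (L : Mat -> Mat) (t : R) (rho E : Mat) : Prop :=
  forall i j, (i < D)%nat -> (j < D)%nat ->
    Un_cv (fun N => re (expsum D L t rho N i j)) (re (E i j)) /\
    Un_cv (fun N => im (expsum D L t rho N i j)) (im (E i j)).

Definition cv_at_infty (f : R -> R) (l : R) : Prop :=
  forall eps, eps > 0 -> exists T, forall t, t >= T -> Rabs (f t - l) < eps.

Definition GAS (D : nat) (L : Mat -> Mat) (rhod : Mat) : Prop :=
  forall rho0, density D rho0 ->
  forall E : R -> Mat, (forall t, t >= 0 -> is_flow D L t rho0 (E t)) ->
  forall i j, (i < D)%nat -> (j < D)%nat ->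
    cv_at_infty (fun t => re (E t i j)) (re (rhod i j)) /\
    cv_at_infty (fun t => im (E t i j)) (im (rhod i j)).

(** * Multipartite structure: n subsystems, subsystem a has dimension dims a.
    Total basis index i < Dtot encodes digits in mixed radix. *)
Fixpoint pref (dims : nat -> nat) (a : nat) : nat :=
  match a with O => 1%nat | S b => (pref dims b * dims b)%nat end.
Definition Dtot (n : nat) (dims : nat -> nat) : nat := pref dims n.
Definition digit (dims : nat -> nat) (i a : nat) : nat :=
  Nat.modulo (Nat.div i (pref dims a)) (dims a).

Definition agree_on (n : nat) (dims : nat -> nat) (S : nat -> bool) (i j : nat) : Prop :=
  forall a, (a < n)%nat -> S a = true -> digit dims i a = digit dims j a.

Definition compl (S : nat -> bool) : nat -> bool := fun a => negb (S a).

(** index with the digits of i on N and the digits of j off N *)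
Fixpoint splice_aux (dims : nat -> nat) (N : nat -> bool) (i j : nat) (m : nat) : nat :=
  match m with
  | O => O
  | S a => (splice_aux dims N i j a +
            (if N a then digit dims i a else digit dims j a) * pref dims a)%nat
  end.
Definition splice (n : nat) (dims : nat -> nat) (N : nat -> bool) (i j : nat) : nat :=
  splice_aux dims N i j n.

(** A = X_N (x) I_{complement of N} *)
Definition QL_on (n : nat) (dims : nat -> nat) (N : nat -> bool) (A : Mat) : Prop :=
  let D := Dtot n dims in
  exists X : Mat,
    (forall i j i' j', (i < D)%nat -> (j < D)%nat -> (i' < D)%nat -> (j' < D)%nat ->
       agree_on n dims N i i' -> agree_on n dims N j j' -> X i j = X i' j') /\
    (forall i j, (i < D)%nat -> (j < D)%nat ->
       (agree_on n dims (compl N) i j -> A i j = X i j) /\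
       (~ agree_on n dims (compl N) i j -> A i j = Czero)).

Definition QLop (n : nat) (dims : nat -> nat) (Nb : list (nat -> bool)) (A : Mat) : Prop :=
  exists N, In N Nb /\ QL_on n dims N A.

Definition QLHam (n : nat) (dims : nat -> nat) (Nb : list (nat -> bool)) (H : Mat) : Prop :=
  exists terms : list Mat,
    (forall T, In T terms -> herm (Dtot n dims) T /\ QLop n dims Nb T) /\
    meq (Dtot n dims) H (fold_right madd mzero terms).

Definition proper_nbhds (n : nat) (Nb : list (nat -> bool)) : Prop :=
  forall N, In N Nb ->
    (forall a, N a = true -> (a < n)%nat) /\ (exists a, (a < n)%nat /\ N a = false).

Definition DQLS (n : nat) (dims : nat -> nat) (Nb : list (nat -> bool)) (psi : Vec) : Prop :=
  exists Ds : list Mat,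
    (forall Dk, In Dk Ds -> QLop n dims Nb Dk /\ veq (Dtot n dims) (mv (Dtot n dims) Dk psi) vzero) /\
    GAS (Dtot n dims) (Lind (Dtot n dims) mzero Ds) (ketbra psi).

Fixpoint agreeb_aux (dims : nat -> nat) (S : nat -> bool) (i j : nat) (m : nat) : bool :=
  match m with
  | O => true
  | S a => agreeb_aux dims S i j a &&
           (negb (S a) || Nat.eqb (digit dims i a) (digit dims j a))
  end.
Definition agreeb (n : nat) (dims : nat -> nat) (S : nat -> bool) (i j : nat) : bool :=
  agreeb_aux dims S i j n.

(** (rho_N (x) I)_{ij} with rho_N = Tr_{complement of N} rho:
    zero unless i,j agree off N; otherwise the sum over the configurations k of
    the complement of N of rho_{(i_N,k),(j_N,k)}. The index m ranges over all
    basis indices with m_N = i_N, i.e. m = (i_N,k), and splice N j m = (j_N,k). *)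
Definition red_tens (n : nat) (dims : nat -> nat) (N : nat -> bool) (rho : Mat) : Mat :=
  let D := Dtot n dims in
  fun i j =>
    if agreeb n dims (compl N) i j then
      Csum D (fun m => if agreeb n dims N m i then rho m (splice n dims N j m) else Czero)
    else Czero.

(** H_0 = intersection over k of supp(rho_{N_k} (x) I) (support = range of a PSD operator) *)
Definition inH0 (n : nat) (dims : nat -> nat) (Nb : list (nat -> bool)) (rhod : Mat) (x : Vec) : Prop :=
  forall N, In N Nb -> exists y : Vec,
    veq (Dtot n dims) (mv (Dtot n dims) (red_tens n dims N rhod) y) x.

Definition inspan (D : nat) (psi : Vec) (x : Vec) : Prop :=
  exists c : Cplx, veq D x (vscale c psi).

Definition is_subspace (D : nat) (K : Vec -> Prop) : Prop :=
  (forall x y, veq D x y -> K x -> K y) /\ K vzero /\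
  (forall x y, K x -> K y -> K (vadd x y)) /\
  (forall c x, K x -> K (vscale c x)).

From Stdlib Require Import Reals Lra Lia List Arith Bool Ring Classical.
From mathcomp Require ssreflect ssrfun ssrbool eqtype ssrnat fintype bigop ssralg ssrnum matrix mxalgebra mxred spectral.
From mathcomp Require Rstruct complex.
Open Scope R_scope.

(** - [span psi] is [H_c]-invariant since [psi] is an eigenvector.
    - Key fact: every vector of [H_0] is annihilated by every [D_k]. Writing
      [D_k = X_N (x) I], one has [D_k (rho_N (x) I) = Tr_{~N}(D_k rho) (x) I],
      which vanishes for [rho = |psi><psi|]; so [D_k] kills the support of
      [rho_N (x) I], which contains [H_0].
    - If [K <= H_0] were a nonzero [H_c]-invariant subspace other than
      [span psi], it would contain an eigenvector [v] of the Hermitian [H_c]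
      outside [span psi] (algebraic closedness, via MathComp). Then [v] is
      dark, [|v><v|]/|v|^2 is stationary, and GAS forces it to equal
      [|psi><psi|]: a contradiction.
    - Shifting [H_c] by [h I] adds a Hermitian QL term, kills [psi], and
      leaves the generator unchanged. *)

Lemma Ceq (a b : Cplx) : re a = re b -> im a = im b -> a = b.
Proof. destruct a, b; simpl; intros; subst; reflexivity. Qed.

Lemma Cring : ring_theory Czero Cone Cadd Cmul Csub Cneg (@eq Cplx).
Proof.
  constructor; intros; apply Ceq; destruct x; try destruct y; try destruct z; simpl; ring.
Qed.
Add Ring CRing : Cring.

Lemma Cconj_mul a b : Cconj (Cmul a b) = Cmul (Cconj a) (Cconj b).
Proof. apply Ceq; destruct a, b; simpl; ring. Qed.
Lemma Cconj_add a b : Cconj (Cadd a b) = Cadd (Cconj a) (Cconj b).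
Proof. apply Ceq; destruct a, b; simpl; ring. Qed.
Lemma Cconj_conj a : Cconj (Cconj a) = a.
Proof. apply Ceq; destruct a; simpl; ring. Qed.

Definition Cinv (c : Cplx) : Cplx :=
  mkC (re c / (re c * re c + im c * im c)) (- im c / (re c * re c + im c * im c)).

Lemma Cinv_l c : c <> Czero -> Cmul (Cinv c) c = Cone.
Proof.
  intros Hc. assert (re c * re c + im c * im c <> 0).
  { intros E. apply Hc. destruct c as [a b]; simpl in *. apply Ceq; simpl; nra. }
  destruct c as [a b]; simpl in *. apply Ceq; simpl; field; auto.
Qed.

Lemma Csum_ext n f g : (forall i, (i < n)%nat -> f i = g i) -> Csum n f = Csum n g.
Proof. induction n; simpl; intros H; auto. rewrite IHn, H; auto. Qed.

Lemma Csum_add n f g : Csum n (fun i => Cadd (f i) (g i)) = Cadd (Csum n f) (Csum n g).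
Proof. induction n; simpl. apply Ceq; simpl; ring. rewrite IHn; ring. Qed.

Lemma Csum_mulr n c f : Csum n (fun i => Cmul c (f i)) = Cmul c (Csum n f).
Proof. induction n; simpl. apply Ceq; simpl; ring. rewrite IHn; ring. Qed.

Lemma Csum_mull n c f : Csum n (fun i => Cmul (f i) c) = Cmul (Csum n f) c.
Proof. rewrite <- (Csum_ext n (fun i => Cmul c (f i))) by (intros; ring). rewrite Csum_mulr; ring. Qed.

Lemma Csum_zero n f : (forall i, (i < n)%nat -> f i = Czero) -> Csum n f = Czero.
Proof.
  intros H; rewrite (Csum_ext n f (fun _ => Czero)) by auto.
  induction n; simpl; auto. rewrite IHn; [ring | auto].
Qed.

Lemma Csum_swap n m f :
  Csum n (fun i => Csum m (fun j => f i j)) = Csum m (fun j => Csum n (fun i => f i j)).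
Proof.
  induction n; simpl.
  - symmetry; apply Csum_zero; auto.
  - rewrite IHn, <- Csum_add; reflexivity.
Qed.

Lemma Csum_unique n f s : (s < n)%nat ->
  (forall i, (i < n)%nat -> i <> s -> f i = Czero) -> Csum n f = f s.
Proof.
  induction n; intros Hs H; [lia|]. simpl.
  destruct (Nat.eq_dec s n) as [->|Hne].
  - rewrite Csum_zero. ring. intros i Hi; apply H; lia.
  - rewrite IHn by (try lia; intros; apply H; lia). rewrite (H n) by lia. ring.
Qed.

Lemma Cconj_sum n f : Cconj (Csum n f) = Csum n (fun i => Cconj (f i)).
Proof. induction n; simpl. apply Ceq; simpl; ring. rewrite Cconj_add, IHn; auto. Qed.

Lemma Csum_graph n (P : nat -> nat -> bool) (s : nat -> nat) g :
  (forall m, (m < n)%nat -> (s m < n)%nat) ->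
  (forall l m, (l < n)%nat -> (m < n)%nat -> P l m = true <-> l = s m) ->
  Csum n (fun l => Csum n (fun m => if P l m then g m else Czero)) = Csum n g.
Proof.
  intros Hs HP. rewrite Csum_swap. apply Csum_ext; intros m Hm.
  rewrite (Csum_unique _ _ (s m)); auto.
  - replace (P (s m) m) with true by (symmetry; apply HP; auto). reflexivity.
  - intros l Hl Hne. destruct (P l m) eqn:E; [now apply HP in E | reflexivity].
Qed.

Section LinearAlgebra.
Variable D : nat.

Lemma veq_refl x : veq D x x.
Proof. intros i _; auto. Qed.

Lemma meq_refl A : meq D A A.
Proof. intros i j _ _; auto. Qed.
Lemma meq_trans A B C : meq D A B -> meq D B C -> meq D A C.
Proof. intros H1 H2 i j Hi Hj; rewrite H1, H2; auto. Qed.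
Lemma madd_meq A A' B B' : meq D A A' -> meq D B B' -> meq D (madd A B) (madd A' B').
Proof. intros H1 H2 i j Hi Hj; unfold madd; rewrite H1, H2; auto. Qed.
Lemma msub_meq A A' B B' : meq D A A' -> meq D B B' -> meq D (msub A B) (msub A' B').
Proof. intros H1 H2 i j Hi Hj; unfold msub; rewrite H1, H2; auto. Qed.
Lemma mscale_meq c A A' : meq D A A' -> meq D (mscale c A) (mscale c A').
Proof. intros H1 i j Hi Hj; unfold mscale; rewrite H1; auto. Qed.
Lemma mmul_meq A A' B B' : meq D A A' -> meq D B B' -> meq D (mmul D A B) (mmul D A' B').
Proof. intros H1 H2 i j Hi Hj; unfold mmul; apply Csum_ext; intros; rewrite H1, H2; auto. Qed.
Lemma mmul_zero_r A : meq D (mmul D A mzero) mzero.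
Proof. intros i j _ _. unfold mmul, mzero. apply Csum_zero; intros; ring. Qed.
Lemma mmul_zero_l A : meq D (mmul D mzero A) mzero.
Proof. intros i j _ _. unfold mmul, mzero. apply Csum_zero; intros; ring. Qed.

Lemma mv_veq A x x' : veq D x x' -> forall i, mv D A x i = mv D A x' i.
Proof. intros H i; unfold mv; apply Csum_ext; intros k Hk; rewrite H; auto. Qed.
Lemma mv_meq A A' x : meq D A A' -> forall i, (i < D)%nat -> mv D A x i = mv D A' x i.
Proof. intros H i Hi; unfold mv; apply Csum_ext; intros k Hk; rewrite H; auto. Qed.
Lemma mv_scale A c x i : mv D A (vscale c x) i = Cmul c (mv D A x i).
Proof. unfold mv, vscale. rewrite <- Csum_mulr. apply Csum_ext; intros; ring. Qed.
Lemma mv_mmul A B x i : mv D (mmul D A B) x i = mv D A (mv D B x) i.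
Proof.
  unfold mv, mmul.
  rewrite (Csum_ext _ _ (fun k => Csum D (fun l => Cmul (A i l) (Cmul (B l k) (x k))))).
  2:{ intros k _. rewrite <- Csum_mull. apply Csum_ext; intros; ring. }
  rewrite Csum_swap. apply Csum_ext; intros l _. rewrite Csum_mulr. reflexivity.
Qed.

Lemma inner_veq x x' y y' : veq D x x' -> veq D y y' -> inner D x y = inner D x' y'.
Proof. intros H1 H2; unfold inner; apply Csum_ext; intros; rewrite H1, H2; auto. Qed.
Lemma inner_scale x c y : inner D x (vscale c y) = Cmul c (inner D x y).
Proof. unfold inner, vscale. rewrite <- Csum_mulr. apply Csum_ext; intros; ring. Qed.
Lemma inner_scale_l c x y : inner D (vscale c x) y = Cmul (Cconj c) (inner D x y).
Proof. unfold inner, vscale. rewrite <- Csum_mulr. apply Csum_ext; intros. rewrite Cconj_mul; ring. Qed.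
Lemma inner_add x y z : inner D x (vadd y z) = Cadd (inner D x y) (inner D x z).
Proof. unfold inner, vadd. rewrite <- Csum_add. apply Csum_ext; intros; ring. Qed.
Lemma inner_zero x : inner D x vzero = Czero.
Proof. unfold inner, vzero. apply Csum_zero; intros; ring. Qed.
Lemma inner_conj x y : inner D x y = Cconj (inner D y x).
Proof.
  unfold inner. rewrite Cconj_sum. apply Csum_ext; intros.
  rewrite Cconj_mul, Cconj_conj. ring.
Qed.

Lemma inner_self v : im (inner D v v) = 0 /\ re (inner D v v) >= 0 /\
  ((exists i, (i < D)%nat /\ v i <> Czero) -> re (inner D v v) > 0).
Proof.
  unfold inner. induction D as [|D' IH]; simpl.
  - split; [|split]; try lra. intros [i [Hi _]]; lia.
  - destruct IH as [H1 [H2 H3]]. destruct (v D') as [a b] eqn:Ev; simpl.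
    split; [nra | split; [nra |]]. intros [i [Hi Hv]].
    destruct (Nat.eq_dec i D') as [->|Hne].
    + assert (a * a + b * b > 0).
      { destruct (Req_dec a 0), (Req_dec b 0); try nra. subst.
        rewrite Ev in Hv. exfalso; apply Hv; auto. }
      nra.
    + assert (re (Csum D' (fun k => Cmul (Cconj (v k)) (v k))) > 0)
        by (apply H3; exists i; split; auto; lia).
      nra.
Qed.

Lemma nonzero_entry v : ~ veq D v vzero -> exists i, (i < D)%nat /\ v i <> Czero.
Proof.
  intros H. apply NNPP; intros H2. apply H. intros i Hi. apply NNPP; intros H3. apply H2.
  exists i; split; auto.
Qed.

Lemma normalize v : ~ veq D v vzero ->
  exists s : R, s <> 0 /\ inner D (vscale (RtoC s) v) (vscale (RtoC s) v) = Cone.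
Proof.
  intros Hv. destruct (inner_self v) as [Iim [_ Ipos]].
  specialize (Ipos (nonzero_entry v Hv)).
  exists (/ sqrt (re (inner D v v))). split.
  - apply Rinv_neq_0_compat, Rgt_not_eq, sqrt_lt_R0; lra.
  - rewrite inner_scale_l, inner_scale.
    assert (Hs : / sqrt (re (inner D v v)) * / sqrt (re (inner D v v)) * re (inner D v v) = 1).
    { rewrite <- Rinv_mult, sqrt_sqrt by lra. field. lra. }
    destruct (inner D v v) as [a b]; simpl in *; subst b. apply Ceq; simpl; nra.
Qed.

Lemma herm_inner A x y : herm D A -> inner D x (mv D A y) = Cconj (inner D y (mv D A x)).
Proof.
  intros H. unfold inner, mv. rewrite Cconj_sum.
  rewrite (Csum_ext _ (fun i => Cmul (Cconj (x i)) (Csum D (fun k => Cmul (A i k) (y k))))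
             (fun i => Csum D (fun k => Cmul (Cconj (x i)) (Cmul (A i k) (y k))))).
  2:{ intros; rewrite Csum_mulr; auto. }
  rewrite Csum_swap. apply Csum_ext; intros k Hk.
  rewrite Cconj_mul, Cconj_sum, Cconj_conj, <- Csum_mulr. apply Csum_ext; intros i Hi.
  rewrite Cconj_mul. rewrite (H i k) by auto. unfold adj. ring.
Qed.

Lemma herm_eigenvalue_real A v c : herm D A -> ~ veq D v vzero ->
  veq D (mv D A v) (vscale c v) -> im c = 0.
Proof.
  intros HA Hv Hc.
  destruct (inner_self v) as [Iim [_ Ipos]]. specialize (Ipos (nonzero_entry v Hv)).
  pose proof (herm_inner A v v HA) as E.
  rewrite (inner_veq v v (mv D A v) (vscale c v)) in E by auto using veq_refl.
  rewrite inner_scale in E. destruct (inner D v v) as [a b]; simpl in *; subst b.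
  destruct c as [c1 c2]. injection E; simpl; intros. nra.
Qed.

Lemma herm_orth_invariant A u c w : herm D A -> veq D (mv D A u) (vscale (RtoC c) u) ->
  inner D u w = Czero -> inner D u (mv D A w) = Czero.
Proof.
  intros HA Hu Hw. rewrite herm_inner by auto.
  rewrite (inner_veq w w (mv D A u) (vscale (RtoC c) u)) by auto using veq_refl.
  rewrite inner_scale, (inner_conj w u), Hw. apply Ceq; simpl; ring.
Qed.

Lemma herm_meq A B : meq D A B -> herm D B -> herm D A.
Proof. intros H1 H2 i j Hi Hj. rewrite H1, H2 by auto. unfold adj. rewrite H1 by auto. auto. Qed.

Lemma herm_fold terms :
  (forall T, In T terms -> herm D T) -> herm D (fold_right madd mzero terms).
Proof.
  induction terms as [|T terms IH]; simpl; intros H i j Hi Hj.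
  - unfold mzero, adj. apply Ceq; simpl; ring.
  - assert (HF := IH (fun T' HT' => H T' (or_intror HT'))).
    set (F := fold_right madd mzero terms) in *.
    change (Cadd (T i j) (F i j) = Cconj (Cadd (T j i) (F j i))).
    rewrite (H T (or_introl eq_refl) i j Hi Hj), (HF i j Hi Hj). unfold adj.
    rewrite Cconj_add; auto.
Qed.

Lemma herm_AA A : herm D (mmul D (adj A) A).
Proof.
  intros i j Hi Hj. change (mmul D (adj A) A i j = Cconj (mmul D (adj A) A j i)).
  unfold mmul. rewrite Cconj_sum. apply Csum_ext; intros.
  unfold adj. rewrite Cconj_mul, Cconj_conj. ring.
Qed.

Lemma mv_ketbra u x i : mv D (ketbra u) x i = Cmul (u i) (inner D u x).
Proof. unfold mv, ketbra, inner. rewrite <- Csum_mulr. apply Csum_ext; intros; ring. Qed.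

Lemma mmul_ketbra_l A u i j : mmul D A (ketbra u) i j = Cmul (mv D A u i) (Cconj (u j)).
Proof. unfold mmul, mv, ketbra. rewrite <- Csum_mull. apply Csum_ext; intros; ring. Qed.

Lemma mmul_ketbra_r A u i j : herm D A -> (j < D)%nat ->
  mmul D (ketbra u) A i j = Cmul (u i) (Cconj (mv D A u j)).
Proof.
  intros H Hj. unfold mmul, mv, ketbra. rewrite Cconj_sum, <- Csum_mulr.
  apply Csum_ext; intros k Hk.
  rewrite (H k j) by auto. unfold adj. rewrite Cconj_mul. ring.
Qed.

Lemma density_ketbra u : inner D u u = Cone -> density D (ketbra u).
Proof.
  intros Hu. split.
  - intros x.
    assert (E : inner D x (mv D (ketbra u) x) = Cmul (Cconj (inner D u x)) (inner D u x)).
    { rewrite (inner_veq x x _ (vscale (inner D u x) u)) by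
        (auto using veq_refl; intros i _; rewrite mv_ketbra; unfold vscale; ring).
      rewrite inner_scale, (inner_conj x u). ring. }
    rewrite E. destruct (inner D u x) as [a b]; simpl. split; nra.
  - unfold trace. rewrite <- Hu. unfold inner, ketbra. apply Csum_ext; intros; ring.
Qed.

Lemma ketbra_eq_inspan u psi : inner D u u = Cone ->
  meq D (ketbra u) (ketbra psi) -> inspan D psi u.
Proof.
  intros Hu E. exists (inner D psi u). intros i Hi. unfold vscale.
  transitivity (mv D (ketbra u) u i); [rewrite mv_ketbra, Hu; ring |].
  rewrite (mv_meq _ _ _ E) by auto. rewrite mv_ketbra. ring.
Qed.

Lemma mv_shift A c x i : (i < D)%nat ->
  mv D (msub A (mscale c mid)) x i = Csub (mv D A x i) (Cmul c (x i)).
Proof.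
  intros Hi. unfold mv, msub, mscale.
  rewrite (Csum_ext _ _ (fun k => Cadd (Cmul (A i k) (x k)) (Cmul (Cneg c) (Cmul (mid i k) (x k)))))
    by (intros; ring).
  rewrite Csum_add, Csum_mulr, (Csum_unique _ (fun k => Cmul (mid i k) (x k)) i); auto.
  - unfold mid. rewrite Nat.eqb_refl. ring.
  - intros k _ Hk. unfold mid. apply Nat.eqb_neq in Hk. rewrite Nat.eqb_sym, Hk. ring.
Qed.

Lemma mmul_shift_l A c r i j : (i < D)%nat ->
  mmul D (msub A (mscale c mid)) r i j = Csub (mmul D A r i j) (Cmul c (r i j)).
Proof. intros Hi. apply (mv_shift A c (fun k => r k j) i Hi). Qed.

Lemma mmul_shift_r A c r i j : (j < D)%nat ->
  mmul D r (msub A (mscale c mid)) i j = Csub (mmul D r A i j) (Cmul c (r i j)).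
Proof.
  intros Hj. unfold mmul, msub, mscale.
  rewrite (Csum_ext _ _ (fun k => Cadd (Cmul (r i k) (A k j)) (Cmul (Cneg c) (Cmul (mid k j) (r i k)))))
    by (intros; ring).
  rewrite Csum_add, Csum_mulr, (Csum_unique _ (fun k => Cmul (mid k j) (r i k)) j); auto.
  - unfold mid. rewrite Nat.eqb_refl. ring.
  - intros k _ Hk. unfold mid. apply Nat.eqb_neq in Hk. rewrite Hk. ring.
Qed.

Lemma herm_scalar_mid r : herm D (mscale (RtoC r) mid).
Proof.
  intros i j _ _. unfold mscale, adj, mid. rewrite Nat.eqb_sym.
  destruct (Nat.eqb j i); apply Ceq; simpl; ring.
Qed.

End LinearAlgebra.

(** This is the only place where algebraic closedness is
    used; we transport [Cplx^D] to row vectors over [complex R] and use the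
    characteristic polynomial of the restricted operator. *)
Module InvariantEigenvector.
Import ssreflect ssrfun ssrbool eqtype ssrnat fintype bigop ssralg ssrnum matrix mxalgebra mxred spectral.
Import Rstruct complex.
Import GRing.Theory.
Local Open Scope ring_scope.

Definition toC (z : Cplx) : R[i] := Complex (re z) (im z).
Definition ofC (z : R[i]) : Cplx := mkC (Re z) (Im z).

Lemma toC_mul a b : toC (Cmul a b) = toC a * toC b.
Proof. by case: a; case: b. Qed.
Lemma toC_add a b : toC (Cadd a b) = toC a + toC b.
Proof. by case: a; case: b. Qed.
Lemma toCK z : ofC (toC z) = z. Proof. by case: z. Qed.
Lemma ofCK z : toC (ofC z) = z. Proof. by case: z. Qed.

Lemma toC_sum n f : toC (Csum n f) = \sum_(i < n) toC (f i).
Proof.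
elim: n => [|n IH]; first by rewrite big_ord0.
by rewrite big_ord_recr /= toC_add IH.
Qed.

Definition toR (D : nat) (x : Vec) : 'rV[R[i]]_D := \row_j toC (x j).
Definition fromR (D : nat) (v : 'rV[R[i]]_D) : Vec :=
  fun i => if (insub i : option 'I_D) is Some k then ofC (v ord0 k) else Czero.
Definition matA (D : nat) (A : Mat) : 'M[R[i]]_D := \matrix_(i, j) toC (A j i).

Lemma toR_mv D A x : toR D (mv D A x) = toR D x *m matA D A.
Proof.
apply/rowP => j; rewrite !mxE /mv toC_sum.
by apply: eq_bigr => i _; rewrite !mxE toC_mul mulrC.
Qed.

Lemma toR_fromR D v : toR D (fromR D v) = v.
Proof.
apply/rowP => j; rewrite mxE /fromR.
have -> : (insub (val j) : option 'I_D) = Some j by rewrite valK.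
by rewrite ofCK.
Qed.

Lemma toR_inj D x y : toR D x = toR D y -> veq D x y.
Proof.
move=> /rowP H i Hi; move: (H (Ordinal (introT ltP Hi))); rewrite !mxE => E.
by rewrite -(toCK (x i)) -(toCK (y i)) E.
Qed.

Lemma toR_veq D x y : veq D x y -> toR D x = toR D y.
Proof. by move=> H; apply/rowP => j; rewrite !mxE H //; apply/ltP. Qed.

Lemma toR_zero D : toR D vzero = 0.
Proof. by apply/rowP => j; rewrite !mxE. Qed.
Lemma toR_vadd D x y : toR D (vadd x y) = toR D x + toR D y.
Proof. by apply/rowP => j; rewrite !mxE toC_add. Qed.
Lemma toR_vscale D c x : toR D (vscale c x) = toC c *: toR D x.
Proof. by apply/rowP => j; rewrite !mxE toC_mul. Qed.

Lemma rank_addsmx_lt {F : fieldType} {D : nat} {M : 'M[F]_D} {v : 'rV_D} :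
  ~~ (v <= M)%MS -> (\rank M < \rank (M + v)%MS)%N.
Proof.
move=> nv; have : (M < M + v)%MS.
  by rewrite ltmxE addsmxSl /=; apply: contra nv; apply: submx_trans (addsmxSr M v).
by rewrite ltmxErank => /andP[].
Qed.

(** By induction on the
    codimension, enlarging [M] by a vector of [P] outside it. *)
Lemma subspace_rowspace (F : fieldType) (D : nat) (P : 'rV[F]_D -> Prop) :
  P 0 -> (forall u v, P u -> P v -> P (u + v)) -> (forall a u, P u -> P (a *: u)) ->
  exists M : 'M[F]_D, forall v, (v <= M)%MS <-> P v.
Proof.
move=> P0 PD PZ.
suff grow : forall k (M : 'M[F]_D), (forall v, (v <= M)%MS -> P v) ->
    (D - \rank M <= k)%N -> exists M' : 'M[F]_D, forall v, (v <= M')%MS <-> P v.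
  apply: (grow D 0) => [v|]; last by rewrite leq_subr.
  by rewrite submx0 => /eqP ->.
elim=> [|k IH] M HM Hk.
- exists M => v; split; first exact: HM.
  move=> Pv; apply: NNPP => /negP nv.
  move: Hk; rewrite leqn0 subn_eq0 => rankD.
  have := leq_trans (rank_addsmx_lt nv) (leq_trans (rank_leq_col (M + v)%MS) rankD).
  by rewrite ltnn.
- case: (classic (forall v, P v -> (v <= M)%MS)) => [Hall | Hout].
    by exists M => v; split=> [/HM|/Hall].
  have [v Hv] := not_all_ex_not _ _ Hout.
  have [Pv /negP nv] := imply_to_and _ _ Hv.
  apply: (IH (M + v)%MS).
    move=> w /sub_addsmxP [[u1 u2] /= ->]; apply: PD; first by apply/HM/submxMl.
    have /sub_rVP [a ->] : (u2 *m v <= v)%MS by apply: submxMl.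
    exact: PZ.
  move: Hk (rank_addsmx_lt nv); rewrite !leq_subLR => Hk lt.
  by apply: (leq_trans Hk); rewrite addnS -addSn leq_add2r.
Qed.

Lemma stable_eigenvector {C : numClosedFieldType} {D : nat} {M A : 'M[C]_D} :
  M != 0 -> (M *m A <= M)%MS ->
  exists v : 'rV_D, [/\ (v <= M)%MS, v != 0 & exists b, v *m A = b *: v].
Proof.
move=> Mn0 sMA.
have rpos : (0 < \rank M)%N by rewrite lt0n mxrank_eq0.
have [a /eigenvalueP [w Hw wn0]] := eigenvalue_closed (restrictmx M A) rpos.
have : stablemx w (restrictmx M A) by rewrite Hw scalemx_sub.
rewrite stablemx_restrict // => /sub_rVP sw.
exists (w *m row_base M); split.
- by rewrite mulmx_sub // eq_row_base.
- by rewrite mulmx_free_eq0 ?row_base_free.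
- exact: sw.
Qed.

Lemma invariant_eigenvector (D : nat) (A : Mat) (P : Vec -> Prop) :
  is_subspace D P -> (exists x, P x /\ ~ veq D x vzero) ->
  (forall x, P x -> P (mv D A x)) ->
  exists v c, P v /\ ~ veq D v vzero /\ veq D (mv D A v) (vscale c v).
Proof.
move=> [Pext [P0 [PD PZ]]] [x [Px xn0]] PA.
have back y : P y -> P (fromR D (toR D y)).
  by move=> Py; apply: (Pext y) => //; apply: toR_inj; rewrite toR_fromR.
have [M HM] : exists M : 'M[R[i]]_D, forall v, (v <= M)%MS <-> P (fromR D v).
  apply: subspace_rowspace.
  - by apply: (Pext vzero) => //; apply: toR_inj; rewrite toR_fromR toR_zero.
  - move=> u v Pu Pv; apply: (Pext (vadd (fromR D u) (fromR D v))); last exact: PD.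
    by apply: toR_inj; rewrite toR_fromR toR_vadd !toR_fromR.
  - move=> a u Pu; apply: (Pext (vscale (ofC a) (fromR D u))); last exact: PZ.
    by apply: toR_inj; rewrite toR_fromR toR_vscale !toR_fromR ofCK.
have Mn0 : M != 0.
  apply/negP => /eqP M0; apply: xn0; apply: toR_inj; rewrite toR_zero.
  have : (toR D x <= M)%MS by apply/HM; apply: back.
  by rewrite M0 submx0 => /eqP.
have sMA : (M *m matA D A <= M)%MS.
  apply/row_subP => i; rewrite row_mul; apply/HM.
  have := PA _ (proj1 (HM _) (row_sub i M)) => /back.
  by rewrite toR_mv toR_fromR.
have [v [vM vn0 [b Hb]]] := stable_eigenvector Mn0 sMA.
exists (fromR D v), (ofC b); split; [exact/HM | split].
- by move=> /toR_veq; rewrite toR_fromR toR_zero => E; move/eqP: vn0.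
- by apply: toR_inj; rewrite toR_mv toR_vscale toR_fromR ofCK.
Qed.

End InvariantEigenvector.

Section Indices.
Variable n : nat.
Variable dims : nat -> nat.
Hypothesis dims_pos : forall a, (a < n)%nat -> (1 <= dims a)%nat.

Lemma pref_pos a : (a <= n)%nat -> (0 < pref dims a)%nat.
Proof.
  induction a; simpl; intros; [lia|].
  specialize (dims_pos a ltac:(lia)). specialize (IHa ltac:(lia)). nia.
Qed.

Lemma digit_lt x a : (a < n)%nat -> (digit dims x a < dims a)%nat.
Proof. intros Ha; unfold digit; apply Nat.mod_upper_bound; pose proof (dims_pos a Ha); lia. Qed.

(** [x mod pref a] is the number formed by the first [a] digits of [x]. *)
Lemma mod_pref_S x a :
  x mod pref dims (S a) = (x mod pref dims a + pref dims a * digit dims x a)%nat.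
Proof. cbn [pref]. unfold digit. apply Nat.Div0.mod_mul_r. Qed.

Lemma digits_eq x y : (x < Dtot n dims)%nat -> (y < Dtot n dims)%nat ->
  (forall a, (a < n)%nat -> digit dims x a = digit dims y a) -> x = y.
Proof.
  intros Hx Hy H.
  assert (K : forall a, (a <= n)%nat -> x mod pref dims a = y mod pref dims a).
  { induction a; intros Ha.
    - cbn [pref]. rewrite !Nat.mod_1_r; auto.
    - rewrite !mod_pref_S. rewrite IHa, H by lia. reflexivity. }
  specialize (K n (le_n n)). unfold Dtot in *. rewrite !Nat.mod_small in K; auto.
Qed.

Fixpoint of_digits (f : nat -> nat) (m : nat) : nat :=
  match m with O => O | S a => (of_digits f a + f a * pref dims a)%nat end.

Lemma of_digits_lt f m : (m <= n)%nat -> (forall a, (a < m)%nat -> (f a < dims a)%nat) ->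
  (of_digits f m < pref dims m)%nat.
Proof.
  induction m; simpl; intros Hm Hf; [lia|].
  specialize (IHm ltac:(lia) ltac:(intros; apply Hf; lia)).
  specialize (Hf m ltac:(lia)). nia.
Qed.

Lemma of_digits_mod f m c : (c <= m)%nat -> (m <= n)%nat ->
  (forall b, (b < m)%nat -> (f b < dims b)%nat) ->
  of_digits f m mod pref dims c = of_digits f c.
Proof.
  intros Hc Hm Hf.
  assert (Hq : exists q, of_digits f m = (of_digits f c + pref dims c * q)%nat).
  { induction Hc as [|m Hc IH].
    - exists 0%nat; lia.
    - destruct (IH ltac:(lia) ltac:(intros; apply Hf; lia)) as [q Hq].
      assert (Hr : exists r, pref dims m = (pref dims c * r)%nat).
      { clear -Hc. induction Hc as [|m' _ [r Hr]]; [exists 1%nat; lia|].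
        exists (r * dims m')%nat. simpl. rewrite Hr. lia. }
      destruct Hr as [r Hr]. exists (q + f m * r)%nat. simpl. rewrite Hq, Hr. nia. }
  destruct Hq as [q ->]. rewrite Nat.mul_comm, Nat.Div0.mod_add.
  apply Nat.mod_small, of_digits_lt; [lia | intros; apply Hf; lia].
Qed.

Lemma of_digits_digit f m a : (m <= n)%nat -> (forall b, (b < m)%nat -> (f b < dims b)%nat) ->
  (a < m)%nat -> digit dims (of_digits f m) a = f a.
Proof.
  intros Hm Hf Ha.
  pose proof (mod_pref_S (of_digits f m) a) as E.
  rewrite !of_digits_mod in E by (auto; lia). simpl in E.
  pose proof (pref_pos a ltac:(lia)). nia.
Qed.

Lemma splice_of_digits N i j m :
  splice_aux dims N i j m = of_digits (fun a => if N a then digit dims i a else digit dims j a) m.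
Proof. induction m; simpl; auto. Qed.

Lemma splice_lt N i j : (splice n dims N i j < Dtot n dims)%nat.
Proof.
  unfold splice, Dtot. rewrite splice_of_digits. apply of_digits_lt; auto.
  intros a Ha; destruct (N a); apply digit_lt; auto.
Qed.

Lemma splice_digit N i j a : (a < n)%nat ->
  digit dims (splice n dims N i j) a = if N a then digit dims i a else digit dims j a.
Proof.
  intros Ha. unfold splice. rewrite splice_of_digits. apply of_digits_digit; auto.
  intros b Hb; destruct (N b); apply digit_lt; auto.
Qed.

Lemma idx_eq_iff N i j : (i < Dtot n dims)%nat -> (j < Dtot n dims)%nat ->
  (i = j <-> agree_on n dims N i j /\ agree_on n dims (compl N) i j).
Proof.
  intros Hi Hj; split.
  - intros ->; split; intros c _ _; auto.
  - intros [H1 H2]. apply digits_eq; auto. intros c Hc.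
    destruct (N c) eqn:E; [apply H1; auto | apply H2; auto; unfold compl; rewrite E; auto].
Qed.

Lemma splice_char N a b l : (l < Dtot n dims)%nat ->
  (l = splice n dims N a b <-> agree_on n dims N l a /\ agree_on n dims (compl N) l b).
Proof.
  intros Hl. rewrite (idx_eq_iff N) by (auto; apply splice_lt).
  unfold agree_on, compl.
  split; intros [H1 H2]; split; intros c Hc Nc;
    specialize (H1 c Hc); specialize (H2 c Hc); rewrite splice_digit in * by auto;
    destruct (N c); simpl in *; try discriminate; auto.
Qed.

End Indices.

Lemma agreeb_iff n dims S i j : agreeb n dims S i j = true <-> agree_on n dims S i j.
Proof.
  unfold agreeb, agree_on.
  induction n as [|m IH]; simpl.
  - split; auto; intros; lia.
  - rewrite andb_true_iff, orb_true_iff, negb_true_iff, Nat.eqb_eq, IH.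
    split.
    + intros [H1 H2] a Ha Sa. destruct (Nat.eq_dec a m) as [->|].
      * destruct H2; congruence.
      * apply H1; auto; lia.
    + intros H; split; [intros; apply H; auto; lia |].
      destruct (S m) eqn:E; [right; apply H; auto | left; auto].
Qed.

Lemma agree_refl n dims S x : agree_on n dims S x x.
Proof. intros a _ _; auto. Qed.
Lemma agree_sym n dims S x y : agree_on n dims S x y -> agree_on n dims S y x.
Proof. intros H a Ha Sa; symmetry; auto. Qed.
Lemma agree_trans n dims S x y z :
  agree_on n dims S x y -> agree_on n dims S y z -> agree_on n dims S x z.
Proof. intros H1 H2 a Ha Sa; rewrite H1; auto. Qed.

Lemma agreeb_sym n dims S x y : agreeb n dims S x y = agreeb n dims S y x.
Proof.
  apply eq_true_iff_eq. rewrite !agreeb_iff. split; apply agree_sym.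
Qed.

Lemma agreeb_congr n dims S x x' y : agree_on n dims S x x' ->
  agreeb n dims S x y = agreeb n dims S x' y.
Proof.
  intros H. apply eq_true_iff_eq. rewrite !agreeb_iff.
  split; intros H'; eapply agree_trans; eauto using agree_sym.
Qed.

Lemma splice_congr n dims N j m m' : agree_on n dims (compl N) m m' ->
  splice n dims N j m = splice n dims N j m'.
Proof.
  intros H. unfold splice.
  assert (K : forall k, (k <= n)%nat -> splice_aux dims N j m k = splice_aux dims N j m' k).
  { induction k; simpl; intros; auto. rewrite IHk by lia.
    destruct (N k) eqn:E; auto. rewrite (H k); [auto | lia | unfold compl; rewrite E; auto]. }
  apply K; lia.
Qed.

Definition N_local (n : nat) (dims : nat -> nat) (N : nat -> bool) (X : Mat) : Prop :=
  forall i j i' j', (i < Dtot n dims)%nat -> (j < Dtot n dims)%nat ->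
    (i' < Dtot n dims)%nat -> (j' < Dtot n dims)%nat ->
    agree_on n dims N i i' -> agree_on n dims N j j' -> X i j = X i' j'.

Lemma QL_on_entries n dims N A : QL_on n dims N A ->
  exists X, N_local n dims N X /\
    forall i l, (i < Dtot n dims)%nat -> (l < Dtot n dims)%nat ->
      A i l = if agreeb n dims (compl N) i l then X i l else Czero.
Proof.
  intros [X [HX HA]]. exists X. split; [exact HX |]. intros i l Hi Hl.
  destruct (agreeb n dims (compl N) i l) eqn:E.
  - apply agreeb_iff in E. apply (HA i l Hi Hl); auto.
  - apply (HA i l Hi Hl). intros F. apply agreeb_iff in F. congruence.
Qed.

Lemma QL_scalar n dims N c : QL_on n dims N (mscale c mid).
Proof.
  exists (fun i j => if agreeb n dims N i j then c else Czero). split.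
  - intros i j i' j' Hi Hj Hi' Hj' H1 H2.
    rewrite (agreeb_congr n dims N i i' j H1), (agreeb_sym n dims N i' j),
      (agreeb_congr n dims N j j' i' H2), (agreeb_sym n dims N j' i'). reflexivity.
  - intros i j Hi Hj. unfold mscale, mid. split; intros Hc.
    + destruct (Nat.eqb i j) eqn:E.
      * apply Nat.eqb_eq in E; subst.
        replace (agreeb n dims N j j) with true by (symmetry; apply agreeb_iff, agree_refl). ring.
      * destruct (agreeb n dims N i j) eqn:F; [| ring].
        apply agreeb_iff in F. apply Nat.eqb_neq in E. exfalso; apply E.
        apply (idx_eq_iff n dims N i j Hi Hj). auto.
    + destruct (Nat.eqb i j) eqn:E; [| ring].
      apply Nat.eqb_eq in E; subst. exfalso; apply Hc, agree_refl.
Qed.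

(** For [A = X_N (x) I] we show
    [A (rho_N (x) I) = (Tr_{~N} (A rho)) (x) I], so a QL operator annihilating
    [psi] annihilates [rho_N (x) I] for [rho = |psi><psi|], hence all of
    [supp(rho_N (x) I)] and in particular [H_0]. *)
Section ReducedStates.
Variable n : nat.
Variable dims : nat -> nat.
Hypothesis dims_pos : forall a, (a < n)%nat -> (1 <= dims a)%nat.
Local Notation D := (Dtot n dims).

Lemma red_tens_meq N rho rho' : meq D rho rho' ->
  meq D (red_tens n dims N rho) (red_tens n dims N rho').
Proof.
  intros H i j _ _. unfold red_tens.
  destruct (agreeb n dims (compl N) i j); auto.
  apply Csum_ext; intros m Hm. destruct (agreeb n dims N m i); auto.
apply H; auto. apply splice_lt; auto.
Qed.

Lemma red_tens_zero N : meq D (red_tens n dims N mzero) mzero.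
Proof.
  intros i j _ _. unfold red_tens, mzero.
  destruct (agreeb n dims (compl N) i j); auto.
  apply Csum_zero; intros m _. destruct (agreeb n dims N m i); auto.
Qed.

Section QLOperator.
Variable N : nat -> bool.
Variables A X : Mat.
Hypothesis X_local : N_local n dims N X.
Hypothesis A_entries : forall i l, (i < D)%nat -> (l < D)%nat ->
  A i l = if agreeb n dims (compl N) i l then X i l else Czero.

(** Both sides of the commutation identity equal
    [sum_m X i m * rho m (splice N j m)] when [i], [j] agree off [N]. *)
Definition QL_contraction (rho : Mat) (i j : nat) : Cplx :=
  Csum D (fun m => Cmul (X i m) (rho m (splice n dims N j m))).

Lemma QL_mul_red_tens_entry rho i j : (i < D)%nat -> (j < D)%nat ->
  agreeb n dims (compl N) i j = true ->
  mmul D A (red_tens n dims N rho) i j = QL_contraction rho i j.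
Proof.
  intros Hi Hj Eij. apply agreeb_iff in Eij. unfold mmul, QL_contraction.
  transitivity (Csum D (fun l => Csum D (fun m =>
    if agreeb n dims N l m && agreeb n dims (compl N) l i
    then Cmul (X i m) (rho m (splice n dims N j m)) else Czero))).
  2:{ apply (Csum_graph D _ (fun m => splice n dims N m i)).
      - intros m _. apply splice_lt; auto.
      - intros l m Hl _. rewrite andb_true_iff, !agreeb_iff. symmetry. apply splice_char; auto. }
  apply Csum_ext; intros l Hl. unfold red_tens.
  rewrite A_entries, (agreeb_sym _ _ _ i l), (agreeb_sym _ _ _ l j),
    (agreeb_congr _ _ _ j i l (agree_sym _ _ _ _ _ Eij)), (agreeb_sym _ _ _ i l) by auto.
  destruct (agreeb n dims (compl N) l i).
  + rewrite <- Csum_mulr. apply Csum_ext; intros m Hm.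
    rewrite (agreeb_sym _ _ _ m l). destruct (agreeb n dims N l m) eqn:Elm; cbn [andb]; [| ring].
    apply agreeb_iff in Elm. rewrite (X_local i l i m) by auto using agree_refl. reflexivity.
  + rewrite Csum_zero by (intros m _; rewrite andb_false_r; reflexivity). ring.
Qed.

Lemma red_tens_QL_mul_entry rho i j : (i < D)%nat -> (j < D)%nat ->
  agreeb n dims (compl N) i j = true ->
  red_tens n dims N (mmul D A rho) i j = QL_contraction rho i j.
Proof.
  intros Hi Hj Eij. unfold red_tens, QL_contraction. rewrite Eij.
  transitivity (Csum D (fun m => Csum D (fun k =>
    if agreeb n dims N m i && agreeb n dims (compl N) m k
    then Cmul (X i k) (rho k (splice n dims N j k)) else Czero))).
  2:{ apply (Csum_graph D _ (fun k => splice n dims N i k)).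
      - intros k _. apply splice_lt; auto.
      - intros m k Hm _. rewrite andb_true_iff, !agreeb_iff. symmetry. apply splice_char; auto. }
  apply Csum_ext; intros m Hm. destruct (agreeb n dims N m i) eqn:Emi; simpl.
  + apply agreeb_iff in Emi. unfold mmul. apply Csum_ext; intros k Hk.
    rewrite A_entries by auto. destruct (agreeb n dims (compl N) m k) eqn:Emk; [| ring].
    apply agreeb_iff in Emk.
    rewrite (X_local m k i k), (splice_congr n dims N j m k) by auto using agree_refl.
    reflexivity.
  + rewrite Csum_zero by auto. reflexivity.
Qed.

Lemma QL_mul_red_tens rho :
  meq D (mmul D A (red_tens n dims N rho)) (red_tens n dims N (mmul D A rho)).
Proof.
  intros i j Hi Hj.
  destruct (agreeb n dims (compl N) i j) eqn:Eij.
  - rewrite QL_mul_red_tens_entry, red_tens_QL_mul_entry by auto. reflexivity.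
  - unfold red_tens at 2. rewrite Eij. unfold mmul. apply Csum_zero; intros l Hl.
    unfold red_tens. rewrite A_entries by auto.
    destruct (agreeb n dims (compl N) i l) eqn:Eil; [| ring].
    destruct (agreeb n dims (compl N) l j) eqn:Elj; [| ring].
    apply agreeb_iff in Eil, Elj.
    assert (agreeb n dims (compl N) i j = true) by (apply agreeb_iff; eapply agree_trans; eauto).
    congruence.
Qed.

End QLOperator.

Lemma QL_annihilates_red_tens N A psi : QL_on n dims N A ->
  veq D (mv D A psi) vzero -> meq D (mmul D A (red_tens n dims N (ketbra psi))) mzero.
Proof.
  intros HA Hpsi. destruct (QL_on_entries n dims N A HA) as [X [HX HAX]].
  eapply meq_trans; [apply (QL_mul_red_tens N A X); auto |].
  eapply meq_trans; [apply red_tens_meq | apply red_tens_zero].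
  intros i j Hi Hj. rewrite mmul_ketbra_l, Hpsi by auto. unfold vzero, mzero. ring.
Qed.

Lemma H0_annihilated Nb A psi x : QLop n dims Nb A ->
  veq D (mv D A psi) vzero -> inH0 n dims Nb (ketbra psi) x -> veq D (mv D A x) vzero.
Proof.
  intros [N [HN HA]] Hpsi Hx. destruct (Hx N HN) as [y Hy]. intros i Hi.
  rewrite <- (mv_veq D A _ _ Hy i), <- mv_mmul.
  unfold mv. apply Csum_zero; intros k Hk.
  rewrite (QL_annihilates_red_tens N A psi HA Hpsi i k Hi Hk). unfold mzero, vzero. ring.
Qed.

End ReducedStates.

Section Lindblad.
Variable D : nat.

Lemma dissip_meq Dk r r' : meq D r r' -> meq D (dissip D Dk r) (dissip D Dk r').
Proof.
  intros H. unfold dissip. apply msub_meq.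
  - apply mmul_meq; [apply mmul_meq |]; auto using meq_refl.
  - apply mscale_meq, madd_meq; apply mmul_meq; auto using meq_refl.
Qed.

Lemma Lind_meq H Ds r r' : meq D r r' -> meq D (Lind D H Ds r) (Lind D H Ds r').
Proof.
  intros Hr. unfold Lind. apply madd_meq.
  - apply mscale_meq, msub_meq; apply mmul_meq; auto using meq_refl.
  - induction Ds; simpl. apply meq_refl. apply madd_meq; auto. apply dissip_meq; auto.
Qed.

Lemma Lind_no_dissipation H Ds rho :
  (forall Dk, In Dk Ds -> meq D (dissip D Dk rho) mzero) ->
  forall i j, (i < D)%nat -> (j < D)%nat ->
  Lind D H Ds rho i j = Cmul (Cneg Ci) (Csub (mmul D H rho i j) (mmul D rho H i j)).
Proof.
  intros Hdis i j Hi Hj. unfold Lind, madd at 1, mscale, msub.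
  replace (fold_right (fun Dk acc => madd (dissip D Dk rho) acc) mzero Ds i j) with Czero;
    [ring |].
  induction Ds as [|Dk Ds IH]; simpl; [reflexivity |].
  unfold madd at 1. rewrite (Hdis Dk (or_introl eq_refl) i j Hi Hj), <- IH.
  - unfold mzero. ring.
  - intros Dk' HDk'. apply Hdis; right; auto.
Qed.

Lemma Lind_zero H Ds : meq D (Lind D H Ds mzero) mzero.
Proof.
  intros i j Hi Hj. rewrite Lind_no_dissipation; auto.
  - rewrite mmul_zero_r, mmul_zero_l by auto. unfold mzero. ring.
  - intros Dk _ k l Hk Hl. unfold dissip, msub, mscale, madd.
    unfold mmul at 1.
    rewrite Csum_zero by (intros x Hx; rewrite mmul_zero_r by auto; unfold mzero; ring).
    rewrite mmul_zero_r, mmul_zero_l by auto. unfold mzero. apply Ceq; simpl; ring.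
Qed.

(** Under a generator with [L rho = 0] the flow is constant, so GAS forces
    [rho] to be the target. *)
Lemma GAS_stationary H Ds rhod rho : GAS D (Lind D H Ds) rhod -> density D rho ->
  meq D (Lind D H Ds rho) mzero -> meq D rho rhod.
Proof.
  intros HG Hd Hst.
  set (L := Lind D H Ds) in *.
  assert (Lp : forall k, meq D (Lpow L (S k) rho) mzero).
  { induction k; simpl. exact Hst.
    apply meq_trans with (L mzero). apply Lind_meq; exact IHk. apply Lind_zero. }
  assert (Ec : forall t N i j, (i < D)%nat -> (j < D)%nat -> expsum D L t rho N i j = rho i j).
  { intros t N i j Hi Hj. unfold expsum.
    rewrite (Csum_unique _ _ 0%nat); [| lia |].
    - simpl. apply Ceq; simpl; field.
    - intros k Hk Hne; destruct k; [lia |].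
      rewrite (Lp k i j Hi Hj); unfold mzero; apply Ceq; simpl; ring. }
  assert (Hconst : forall a l, cv_at_infty (fun _ => a) l -> a = l).
  { intros a l Hc. destruct (Req_dec a l) as [E|E]; auto. exfalso.
    destruct (Hc (Rabs (a - l))) as [T HT]; [apply Rabs_pos_lt; lra |].
    specialize (HT T (Rge_refl T)). lra. }
  intros i j Hi Hj.
  destruct (HG rho Hd (fun _ => rho)) with (i := i) (j := j) as [H1 H2]; auto.
  - intros t _ a b Ha Hb. split; intros eps He; exists 0%nat; intros; rewrite Ec by auto;
      unfold R_dist; rewrite Rminus_diag, Rabs_R0; lra.
  - apply Ceq; apply Hconst; auto.
Qed.

Lemma GAS_ext L1 L2 r : (forall rho, meq D (L1 rho) (L2 rho)) ->
  (forall rho rho', meq D rho rho' -> meq D (L1 rho) (L1 rho')) ->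
  GAS D L1 r -> GAS D L2 r.
Proof.
  intros Heq Hm HG rho0 Hd E HE.
  assert (Lq : forall k rho, meq D (Lpow L1 k rho) (Lpow L2 k rho)).
  { induction k; simpl; intros. apply meq_refl.
    apply meq_trans with (L1 (Lpow L2 k rho)); auto. }
  intros i0 j0 Hi0 Hj0. apply (HG rho0 Hd E); auto. intros t ht i j Hi Hj.
  assert (Es : forall N, expsum D L1 t rho0 N i j = expsum D L2 t rho0 N i j).
  { intros N; unfold expsum; apply Csum_ext; intros k _; rewrite Lq; auto. }
  destruct (HE t ht i j Hi Hj) as [H1 H2].
  split; intros eps He; [destruct (H1 eps He) as [N0 HN] | destruct (H2 eps He) as [N0 HN]];
    exists N0; intros; rewrite Es; auto.
Qed.

Lemma dissip_dark Dk u : veq D (mv D Dk u) vzero -> meq D (dissip D Dk (ketbra u)) mzero.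
Proof.
  intros HK i j Hi Hj.
  assert (HK2 : veq D (mv D (mmul D (adj Dk) Dk) u) vzero).
  { intros k Hk. rewrite mv_mmul, (mv_veq D (adj Dk) _ vzero HK).
    unfold mv, vzero. apply Csum_zero; intros; ring. }
  unfold dissip, msub, mscale, madd. unfold mmul at 1. rewrite (Csum_zero D).
  2:{ intros k Hk. fold (mmul D Dk (ketbra u)). rewrite mmul_ketbra_l, HK by auto.
      unfold vzero; ring. }
  rewrite mmul_ketbra_l, mmul_ketbra_r, !HK2 by (auto; apply herm_AA).
  unfold vzero, mzero. apply Ceq; simpl; ring.
Qed.

Lemma pure_state_stationary H Ds u c :
  herm D H -> veq D (mv D H u) (vscale c u) -> im c = 0 ->
  (forall Dk, In Dk Ds -> veq D (mv D Dk u) vzero) ->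
  meq D (Lind D H Ds (ketbra u)) mzero.
Proof.
  intros HH Hu Hc HDs i j Hi Hj.
  rewrite Lind_no_dissipation by (auto; intros; apply dissip_dark; auto).
  rewrite mmul_ketbra_l, mmul_ketbra_r, !Hu by auto.
  unfold vscale, mzero. destruct c as [c1 c2]; simpl in Hc; subst.
  destruct (u i), (u j); apply Ceq; simpl; ring.
Qed.

Lemma Lind_shift H Ds h rho :
  meq D (Lind D H Ds rho) (Lind D (msub H (mscale (RtoC h) mid)) Ds rho).
Proof.
  apply madd_meq; [| apply meq_refl]. apply mscale_meq. intros i j Hi Hj.
  change (Csub (mmul D H rho i j) (mmul D rho H i j) =
          Csub (mmul D (msub H (mscale (RtoC h) mid)) rho i j)
               (mmul D rho (msub H (mscale (RtoC h) mid)) i j)).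
  rewrite mmul_shift_l, mmul_shift_r by auto. ring.
Qed.

End Lindblad.

Section Subspaces.
Variable D : nat.
Variable psi : Vec.
Hypothesis psi_unit : inner D psi psi = Cone.

Lemma unit_nonzero : ~ veq D psi vzero.
Proof.
  intros Hz. rewrite (inner_veq D psi psi psi vzero), inner_zero in psi_unit
    by auto using veq_refl.
  injection psi_unit; lra.
Qed.

Lemma subspace_contains_span K x : is_subspace D K -> K psi -> inspan D psi x -> K x.
Proof.
  intros [Kext [_ [_ Ksc]]] Kpsi [c Hc].
  apply (Kext (vscale c psi)); [intros i Hi; symmetry; auto | apply Ksc; auto].
Qed.

Definition orth_part (x : Vec) : Vec := vadd x (vscale (Cneg (inner D psi x)) psi).

Lemma orth_part_orth x : inner D psi (orth_part x) = Czero.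
Proof. unfold orth_part. rewrite inner_add, inner_scale, psi_unit. ring. Qed.

Lemma orth_part_nonzero x : ~ inspan D psi x -> ~ veq D (orth_part x) vzero.
Proof.
  intros nx Hw. apply nx. exists (inner D psi x). intros i Hi.
  specialize (Hw i Hi). unfold orth_part, vadd, vscale, vzero in *.
  transitivity (Cadd (Cadd (x i) (Cmul (Cneg (inner D psi x)) (psi i)))
                     (Cmul (inner D psi x) (psi i))); [ring |].
  rewrite Hw. ring.
Qed.

Lemma inspan_orth_zero v : inner D psi v = Czero -> inspan D psi v -> veq D v vzero.
Proof.
  intros Hv [c Hc].
  rewrite (inner_veq D psi psi v (vscale c psi)), inner_scale, psi_unit in Hv
    by auto using veq_refl.
  intros i Hi. rewrite Hc by auto. unfold vscale, vzero.
  replace c with Czero by (rewrite <- Hv; ring). ring.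
Qed.

Lemma subspace_orth K : is_subspace D K -> is_subspace D (fun w => K w /\ inner D psi w = Czero).
Proof.
  intros [Kext [Kz [Kadd Ksc]]]. split; [| split; [| split]].
  - intros a b Hab [Ka Ia]. split; [eapply Kext; eauto |].
    rewrite <- Ia. symmetry. apply inner_veq; auto using veq_refl.
  - split; auto. apply inner_zero.
  - intros a b [Ka Ia] [Kb Ib]. split; auto. rewrite inner_add, Ia, Ib. ring.
  - intros c a [Ka Ia]. split; auto. rewrite inner_scale, Ia. ring.
Qed.

(** A nonzero [H]-invariant subspace [K] different from [span psi], where
    [psi] is an eigenvector of the Hermitian [H], contains an eigenvector of
    [H] outside [span psi]: look in [K] itself if [psi] is not in [K], and in
    [K] orthogonal to [psi] otherwise. *)
Lemma eigenvector_outside_span H h K :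
  herm D H -> veq D (mv D H psi) (vscale (RtoC h) psi) ->
  is_subspace D K -> (forall x, K x -> K (mv D H x)) ->
  (exists x, K x /\ ~ veq D x vzero) -> ~ (forall x, K x <-> inspan D psi x) ->
  exists v c, K v /\ ~ veq D v vzero /\ veq D (mv D H v) (vscale c v) /\ ~ inspan D psi v.
Proof.
  intros HH Hpsi HK Hinv Hnz Hneq.
  destruct (classic (K psi)) as [Kpsi | nKpsi].
  - assert (Hx : exists x, K x /\ ~ inspan D psi x).
    { apply NNPP; intros Hn. apply Hneq. intros x; split.
      - intros Kx. apply NNPP; intros ni. apply Hn. exists x; auto.
      - apply subspace_contains_span; auto. }
    destruct Hx as [x [Kx nx]].
    destruct (InvariantEigenvector.invariant_eigenvector D H
                (fun w => K w /\ inner D psi w = Czero)) as [v [c [[Kv Ov] [nv Evc]]]].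
    + apply subspace_orth; auto.
    + exists (orth_part x). split; [split |].
      * destruct HK as [_ [_ [Kadd Ksc]]]. apply Kadd, Ksc; auto.
      * apply orth_part_orth.
      * apply orth_part_nonzero; auto.
    + intros w [Kw Ow]. split; auto. apply herm_orth_invariant with h; auto.
    + exists v, c. repeat split; auto. intros Hs. apply nv, inspan_orth_zero; auto.
  - destruct (InvariantEigenvector.invariant_eigenvector D H K HK Hnz Hinv)
      as [v [c [Kv [nv Evc]]]].
    exists v, c. repeat split; auto. intros [c' Hc'].
    destruct (classic (c' = Czero)) as [-> | Hc0].
    + apply nv. intros i Hi. rewrite Hc' by auto. unfold vscale, vzero. ring.
    + apply nKpsi. destruct HK as [Kext [_ [_ Ksc]]].
      apply (Kext (vscale (Cinv c') v)); [| apply Ksc; auto].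
      intros i Hi. unfold vscale at 1. rewrite Hc' by auto. unfold vscale.
      transitivity (Cmul (Cmul (Cinv c') c') (psi i)); [ring |].
      rewrite Cinv_l by auto. ring.
Qed.

End Subspaces.

(** Under GAS to [|psi><psi|], every eigenvector of the Hermitian [H] that
    all [D_k] annihilate lies in [span psi]: its normalized pure state is
    stationary, hence equal to the target. *)
Lemma dark_eigenvector_in_span D H Ds psi v c :
  herm D H -> GAS D (Lind D H Ds) (ketbra psi) ->
  (forall Dk, In Dk Ds -> veq D (mv D Dk v) vzero) ->
  ~ veq D v vzero -> veq D (mv D H v) (vscale c v) -> inspan D psi v.
Proof.
  intros HH HG Hdark Hv Hc.
  destruct (normalize D v Hv) as [s [Hs Hu]].
  set (u := vscale (RtoC s) v) in *.
  assert (Eu : veq D (mv D H u) (vscale c u)).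
  { intros i Hi. unfold u. rewrite mv_scale, Hc by auto. unfold vscale. ring. }
  assert (Ku : forall Dk, In Dk Ds -> veq D (mv D Dk u) vzero).
  { intros Dk HDk i Hi. unfold u. rewrite mv_scale, (Hdark Dk HDk i Hi). unfold vzero. ring. }
  pose proof (GAS_stationary D H Ds (ketbra psi) (ketbra u) HG (density_ketbra D u Hu)
                (pure_state_stationary D H Ds u c HH Eu (herm_eigenvalue_real D H v c HH Hv Hc) Ku))
    as Hstat.
  destruct (ketbra_eq_inspan D u psi Hu Hstat) as [c' Hc'].
  exists (Cmul (RtoC (/ s)) c'). intros i Hi. specialize (Hc' i Hi).
  unfold u, vscale in *.
  transitivity (Cmul (RtoC (/ s)) (Cmul (RtoC s) (v i))); [| rewrite Hc'; ring].
  replace (v i) with (Cmul (RtoC (/ s * s)) (v i)) at 1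
    by (rewrite Rinv_l by auto; apply Ceq; simpl; ring).
  apply Ceq; simpl; ring.
Qed.

Lemma QLHam_herm n dims Nb H : QLHam n dims Nb H -> herm (Dtot n dims) H.
Proof.
  intros [terms [Ht Hm]]. eapply herm_meq; [exact Hm |].
  apply herm_fold. intros T HT; apply Ht; auto.
Qed.

Lemma QLHam_nil n dims H : QLHam n dims nil H -> meq (Dtot n dims) H mzero.
Proof.
  intros [[|T terms] [Ht Hm]].
  - exact Hm.
  - destruct (Ht T (or_introl eq_refl)) as [_ [N [[] _]]].
Qed.

(** Subtracting [h I] from a QL Hamiltonian with eigenvector [psi] of
    eigenvalue [h] gives a QL Hamiltonian: [h I] is a Hermitian QL term on any
    neighborhood, and if there is none then [H = 0] forces [h = 0]. *)
Lemma QLHam_shift n dims Nb H psi h : QLHam n dims Nb H ->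
  veq (Dtot n dims) (mv (Dtot n dims) H psi) (vscale (RtoC h) psi) ->
  ~ veq (Dtot n dims) psi vzero -> QLHam n dims Nb (msub H (mscale (RtoC h) mid)).
Proof.
  intros HQL Hpsi Hnz. destruct Nb as [|N0 Nb].
  - assert (H0 := QLHam_nil n dims H HQL).
    assert (h = 0) as ->.
    { destruct (nonzero_entry _ psi Hnz) as [i [Hi Hpi]]. specialize (Hpsi i Hi).
      rewrite (mv_meq _ H mzero psi H0 i Hi) in Hpsi.
      unfold mv, mzero in Hpsi. rewrite Csum_zero in Hpsi by (intros; ring).
      unfold vscale in Hpsi. destruct (psi i) as [a b]. injection Hpsi; simpl; intros.
      destruct (Req_dec h 0); auto. exfalso; apply Hpi. apply Ceq; simpl; nra. }
    exists nil. split; [intros T [] |]. intros i j Hi Hj. unfold msub, mscale.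
    rewrite H0 by auto. unfold mzero. apply Ceq; simpl; ring.
  - destruct HQL as [terms [Ht Hm]].
    exists (mscale (RtoC (- h)) mid :: terms). split.
    + intros T [<- | HT]; [| apply Ht; auto]. split; [apply herm_scalar_mid |].
      exists N0. split; [left; auto | apply QL_scalar].
    + intros i j Hi Hj.
      change (msub H (mscale (RtoC h) mid) i j =
              Cadd (mscale (RtoC (- h)) mid i j) (fold_right madd mzero terms i j)).
      unfold msub, mscale. rewrite Hm by auto.
      destruct (mid i j), (fold_right madd mzero terms i j). apply Ceq; simpl; ring.
Qed.

Theorem proposition3
  (n : nat) (dims : nat -> nat) (Nb : list (nat -> bool))
  (psi : Vec) (Hc : Mat) (Ds : list Mat) (h : R) :
  (forall a, (a < n)%nat -> (1 <= dims a)%nat) ->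
  proper_nbhds n Nb ->
  inner (Dtot n dims) psi psi = Cone ->
  ~ DQLS n dims Nb psi ->
  QLHam n dims Nb Hc ->
  (forall Dk, In Dk Ds -> QLop n dims Nb Dk) ->
  (forall Dk, In Dk Ds -> veq (Dtot n dims) (mv (Dtot n dims) Dk psi) vzero) ->
  veq (Dtot n dims) (mv (Dtot n dims) Hc psi) (vscale (RtoC h) psi) ->
  GAS (Dtot n dims) (Lind (Dtot n dims) Hc Ds) (ketbra psi) ->
  (* H_d is H_c-invariant *)
  (forall x, inspan (Dtot n dims) psi x ->
     inspan (Dtot n dims) psi (mv (Dtot n dims) Hc x)) /\
  (* no nonzero H_c-invariant subspace K of H_0 other than H_d *)
  (~ exists K : Vec -> Prop,
       is_subspace (Dtot n dims) K /\
       (forall x, K x -> inH0 n dims Nb (ketbra psi) x) /\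
       (exists x, K x /\ ~ veq (Dtot n dims) x vzero) /\
       ~ (forall x, K x <-> inspan (Dtot n dims) psi x) /\
       (forall x, K x -> K (mv (Dtot n dims) Hc x))) /\
  (* H_c' = H_c - h I *)
  (QLHam n dims Nb (msub Hc (mscale (RtoC h) mid)) /\
   veq (Dtot n dims) (mv (Dtot n dims) (msub Hc (mscale (RtoC h) mid)) psi) vzero /\
   GAS (Dtot n dims) (Lind (Dtot n dims) (msub Hc (mscale (RtoC h) mid)) Ds) (ketbra psi)).
Proof.
  intros Hdims _ Hunit _ HQL HDsQL HDsdark Heig HGAS.
  set (D := Dtot n dims) in *.
  assert (Hherm : herm D Hc) by (apply (QLHam_herm n dims Nb); auto).
  split; [| split].
  -
    intros x [c Hx]. exists (Cmul c (RtoC h)). intros i Hi.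
    rewrite (mv_veq D Hc x (vscale c psi) Hx i), mv_scale, Heig by auto. unfold vscale; ring.
  - (* an invariant [K] in [H_0] would contain a dark eigenvector outside [span psi] *)
    intros [K [HK [HK0 [Hnz [Hneq Hinv]]]]].
    destruct (eigenvector_outside_span D psi Hunit Hc h K Hherm Heig HK Hinv Hnz Hneq)
      as [v [c [Kv [nv [Evc niv]]]]].
    apply niv, (dark_eigenvector_in_span D Hc Ds psi v c); auto.
    intros Dk HDk. apply (H0_annihilated n dims Hdims Nb Dk psi); auto.
  -
    split; [| split].
    + apply (QLHam_shift n dims Nb Hc psi h); auto. apply unit_nonzero; auto.
    + intros i Hi. rewrite mv_shift, Heig by auto. unfold vscale, vzero. ring.
    + apply (GAS_ext D (Lind D Hc Ds)); auto using Lind_meq.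
      intros rho. apply Lind_shift.
Qed.
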